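(* Let $H$ be a reasonable Hintikka tree with induced measure $\beta$, and for a sentence $\varphi$ of depth $d$ let $\boldsymbol{\varphi} = \sum_{\delta^{(d)} \in \mathrm{dnf}(\varphi)} \chi_{[\delta^{(0)}\cdots\delta^{(d)}]} \in L^2(\Psi^\omega, \beta)$. Then for all sentences $\varphi, \varphi_1, \varphi_2$: (1) $\langle \boldsymbol{\varphi}, \boldsymbol{\lnot\varphi} \rangle = 0$; (2) $\boldsymbol{\varphi_1 \lor \varphi_2} = \boldsymbol{\varphi_1} \oplus \boldsymbol{\varphi_2}$, where $(f \oplus g)(x) = \max(f(x), g(x))$; (3) if $\langle \boldsymbol{\varphi_1}, \boldsymbol{\varphi_2} \rangle = 0$ then $\varphi_1 \models \lnot \varphi_2$.
   Context: $L$ is a first-order language without equality with finitely many predicate symbols and no function or constant symbols. For $d \in \mathbb{N}$, $\Delta^{(d)}$ is the finite set of Hintikka constituents of depth $d$ with no free variables ($\Delta^{(0)} = \{\top\}$); distinct constituents of the same depth are mutually exclusive, every sentence $\varphi$ of quantifier depth $d$ is logically equivalent to the disjunction of a set $\mathrm{dnf}(\varphi) \subseteq \Delta^{(d)}$ (its Hintikka distributive normal form), and $\mathrm{expand}(e,\delta^{(d)})\subseteq\Delta^{(d+e)}$ denotes the expansions of $\delta^{(d)}$, whose disjunction is equivalent to $\delta^{(d)}$. A fixed decidable criterion of trivial inconsistency for constituents is given; trivially inconsistent constituents are inconsistent (unsatisfiable). Refinement tree: on $\Delta = \bigcup_d \Delta^{(d)}$ put an edge from each $\delta^{(d)}$ to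 each member of $\mathrm{expand}(1,\delta^{(d)})$, keeping a constituent lying in several depth-$d$ expansions as child of only one of them. A Hintikka tree is a function $H: \Delta \to [0,1]$ with $H(\delta^{(0)}) = 1$ and $H(\delta) = \sum_{\delta' \text{ child of } \delta} H(\delta')$; it is reasonable if $H(\delta) > 0$ for every constituent $\delta$ that is not trivially inconsistent. $\Psi^\omega$ is the set of infinite root paths in the refinement tree with the topology generated by cylinders $[\delta^{(0)}\cdots\delta^{(d)}]$ (paths with that prefix; here $\delta^{(0)}\cdots\delta^{(d)}$ is the root path to $\delta^{(d)}$), $\beta$ is the unique Borel probability measure with $\beta([\delta^{(0)}\cdots\delta^{(d)}]) = H(\delta^{(d)})$, $\chi_X$ is the indicator of $X$, and $L^2(\Psi^\omega,\beta)$ has inner product $\langle f, g\rangle = \int f g\, d\beta$. *)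

From HB Require Import structures.
From mathcomp Require Import all_boot all_order all_algebra.
From mathcomp Require Import all_classical all_reals all_analysis.
Set Implicit Arguments. Unset Strict Implicit. Unset Printing Implicit Defensive.
Import Order.TTheory GRing.Theory Num.Theory.
Local Open Scope ring_scope.

(* A first-order language L without equality, with np predicate symbols       *)
(* P_0 .. P_(np-1) of arities ar p, and no function or constant symbols.      *)
Section FOL.
Variables (np : nat) (ar : 'I_np -> nat).

Inductive foform : Type :=
  | FAtom (p : 'I_np) of (ar p).-tuple nat
  | FNot of foform
  | FAnd of foform & foform
  | FOr of foform & foform
  | FImp of foform & foform
  | FEx of nat & foform
  | FAll of nat & foform.

Fixpoint qdepth (f : foform) : nat :=
  match f with
  | FAtom _ _ => 0
  | FNot g => qdepth g
  | FAnd g h | FOr g h | FImp g h => maxn (qdepth g) (qdepth h)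
  | FEx _ g | FAll _ g => (qdepth g).+1
  end.

Fixpoint fv (f : foform) : seq nat :=
  match f with
  | FAtom _ t => tval t
  | FNot g => fv g
  | FAnd g h | FOr g h | FImp g h => fv g ++ fv h
  | FEx x g | FAll x g => [seq y <- fv g | y != x]
  end.

Definition sentence (f : foform) : Prop := fv f = [::].

(* Tarskian semantics: a structure is a type D with interpretations I of the
   predicate symbols; assignments a : nat -> D (so D is nonempty). *)
Definition upd (D : Type) (a : nat -> D) (x : nat) (e : D) : nat -> D :=
  fun y => if y == x then e else a y.

Fixpoint sat (D : Type) (I : forall p : 'I_np, (ar p).-tuple D -> Prop)
    (a : nat -> D) (f : foform) : Prop :=
  match f with
  | FAtom p t => I p (map_tuple a t)
  | FNot g => ~ sat I a g
  | FAnd g h => sat I a g /\ sat I a h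
  | FOr g h => sat I a g \/ sat I a h
  | FImp g h => sat I a g -> sat I a h
  | FEx x g => exists e : D, sat I (upd a x e) g
  | FAll x g => forall e : D, sat I (upd a x e) g
  end.

Definition entails (f g : foform) : Prop :=
  forall (D : Type) (I : forall p : 'I_np, (ar p).-tuple D -> Prop)
    (a : nat -> D), sat I a f -> sat I a g.

(* Hintikka constituents.  Con d k = constituents of depth d in the free      *)
(* variables x_0 .. x_(k-1):                                                   *)
(*  - depth 0: a choice of sign for every atomic formula in x_0..x_(k-1);     *)
(*  - depth d+1: such a sign choice A together with a set S of depth-d        *)
(*    constituents in x_0..x_k, standing for                                  *)
(*      A /\ (/\_(g in S) exists x_k, g) /\ forall x_k, \/_(g in S) g.        *)
Definition Atm (k : nat) : finType := {p : 'I_np & (ar p).-tuple 'I_k}.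

Fixpoint Con (d k : nat) : finType :=
  match d with
  | 0 => {ffun Atm k -> bool}
  | d'.+1 => ({ffun Atm k -> bool} * {set Con d' k.+1})%type
  end.

Definition atomsOf (d k : nat) : Con d k -> {ffun Atm k -> bool} :=
  match d return Con d k -> {ffun Atm k -> bool} with
  | 0 => fun x => x
  | _.+1 => fun x => x.1
  end.

(* Delta^(d) = Con d 0 (constituents without free variables). *)

Definition atoms_hold (D : Type) (I : forall p : 'I_np, (ar p).-tuple D -> Prop)
    (a : nat -> D) (k : nat) (v : {ffun Atm k -> bool}) : Prop :=
  forall t : Atm k,
    v t <-> I (tag t) (map_tuple (fun i : 'I_k => a (nat_of_ord i)) (tagged t)).

Fixpoint satC (D : Type) (I : forall p : 'I_np, (ar p).-tuple D -> Prop)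
    (d k : nat) : (nat -> D) -> Con d k -> Prop :=
  match d return (nat -> D) -> Con d k -> Prop with
  | 0 => fun a x => atoms_hold I a x
  | d'.+1 => fun a x =>
      [/\ atoms_hold I a x.1,
          (forall g, g \in x.2 -> exists e : D, @satC D I d' k.+1 (upd a k e) g) &
          (forall e : D, exists2 g, g \in x.2 & @satC D I d' k.+1 (upd a k e) g)]
  end.

Fixpoint reduct (d k : nat) : Con d.+1 k -> Con d k :=
  match d return Con d.+1 k -> Con d k with
  | 0 => fun x => x.1
  | d'.+1 => fun x => (x.1, [set @reduct d' k.+1 g | g in x.2])
  end.

(* expand(1, delta): the depth-(d+1) constituents subordinate to delta;
   these are the children of delta in the refinement tree (each depth-(d+1)
   constituent has the unique parent given by reduct). *)
Definition expand1 (d : nat) (x : Con d 0) : {set Con d.+1 0} :=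
  [set y | reduct y == x].

(* Syntactic evaluation of a formula in a constituent; the variable map s     *)
(* sends formula variables to the positions of the constituent.               *)
Definition oseq (T : Type) (s : seq (option T)) : option (seq T) :=
  foldr (fun o acc => match o, acc with
                      | Some x, Some l => Some (x :: l)
                      | _, _ => None end) (Some [::]) s.

Definition lookA (k : nat) (v : {ffun Atm k -> bool}) (p : 'I_np)
    (t : (ar p).-tuple nat) (s : nat -> option 'I_k) : bool :=
  match oseq [seq s i | i <- tval t] with
  | Some l =>
      match (insub l : option ((ar p).-tuple 'I_k)) with
      | Some u => v (@Tagged 'I_np p (fun q => (ar q).-tuple 'I_k) u)
      | None => false
      end
  | None => false
  end.

Definition extv (k : nat) (s : nat -> option 'I_k) (x : nat) : nat -> option 'I_k.+1 :=
  fun y => if y == x then Some ord_max else omap (widen_ord (leqnSn k)) (s y).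

Fixpoint eval (f : foform) (d k : nat) {struct f} : Con d k -> (nat -> option 'I_k) -> bool :=
  match f with
  | FAtom p t => fun x s => lookA (atomsOf x) t s
  | FNot g => fun x s => ~~ eval g x s
  | FAnd g h => fun x s => eval g x s && eval h x s
  | FOr g h => fun x s => eval g x s || eval h x s
  | FImp g h => fun x s => eval g x s ==> eval h x s
  | FEx y g =>
      match d return Con d k -> (nat -> option 'I_k) -> bool with
      | 0 => fun _ _ => false
      | d'.+1 => fun x s => [exists c in x.2, @eval g d' k.+1 c (extv s y)]
      end
  | FAll y g =>
      match d return Con d k -> (nat -> option 'I_k) -> bool with
      | 0 => fun _ _ => false
      | d'.+1 => fun x s => [forall c in x.2, @eval g d' k.+1 c (extv s y)]
      end
  end.

Definition dnf (f : foform) : {set Con (qdepth f) 0} :=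
  [set x | eval f x (fun _ => None)].

(* The space Psi^omega of infinite root paths of the refinement tree.         *)
Fixpoint clift (d k : nat) : Con d k -> Con d.+1 k :=
  match d return Con d k -> Con d.+1 k with
  | 0 => fun x => (x, finset.set0)
  | d'.+1 => fun x => (x.1, [set @clift d' k.+1 g | g in x.2])
  end.

Lemma reduct_clift d k (x : Con d k) : reduct (clift x) = x.
Proof.
elim: d k x => [|d IH] k x //=.
case: x => a S /=; congr (_, _).
rewrite -imset_comp -[RHS]imset_id; apply: eq_imset => g /=; exact: IH.
Qed.

Fixpoint cpoint (d : nat) : Con d 0 :=
  match d with
  | 0 => [ffun => false]
  | d'.+1 => clift (cpoint d')
  end.

Lemma cpoint_path d : reduct (cpoint d.+1) = cpoint d.
Proof. exact: reduct_clift. Qed.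

Definition path : Type :=
  {x : forall d, Con d 0 | forall d, reduct (x d.+1) = x d}.

HB.instance Definition _ := gen_eqMixin path.
HB.instance Definition _ := gen_choiceMixin path.
HB.instance Definition _ := isPointed.Build path (exist _ cpoint cpoint_path).

Definition cyl (d : nat) (x : Con d 0) : set path :=
  [set w | proj1_sig w d = x].

Definition cylinders : set (set path) :=
  [set A | exists d (x : Con d 0), A = cyl x].

(* Psi^omega with the sigma-algebra generated by the cylinders, which is the
   Borel sigma-algebra of the topology generated by the (countably many,
   clopen) cylinders. *)
Definition Psi : measurableType _ := g_sigma_algebraType cylinders.

Definition hintikka_tree (R : realType) (H : forall d, Con d 0 -> R) : Prop :=
  [/\ (forall x : Con 0 0, H 0 x = 1),
      (forall d (x : Con d 0), 0 <= H d x <= 1) &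
      (forall d (x : Con d 0), H d x = \sum_(y in expand1 x) H d.+1 y)].

Definition reasonable (R : realType) (triv : forall d, Con d 0 -> bool)
    (H : forall d, Con d 0 -> R) : Prop :=
  forall d (x : Con d 0), ~~ triv d x -> 0 < H d x.

(* the element bold-phi of L^2(Psi^omega, beta) (a representative) *)
Definition boldf (R : realType) (f : foform) : Psi -> R :=
  fun w => \sum_(x in dnf f) \1_(cyl x) w.

End FOL.

From Pilot Require Import Defs.
From HB Require Import structures.
From mathcomp Require Import all_boot all_order all_algebra.
From mathcomp Require Import all_classical all_reals all_analysis.
From mathcomp Require Import measurable_realfun.
Import Order.TTheory GRing.Theory Num.Theory.
Local Open Scope ring_scope.

(* Evaluating a formula in a constituent is unchanged by [reduct] once the
   depth suffices, so the bold version of a sentence is the indicator of the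
   paths whose node at any large enough depth evaluates it to true.  Hence
   bold (f /\ g) = bold f * bold g and bold (f \/ g) = max (bold f) (bold g)
   pointwise, which gives (1) and (2).  For (3), a model of phi1 /\ phi2
   realizes a constituent of that depth in which both sentences evaluate to
   true; being satisfiable it is not trivially inconsistent, so its cylinder
   has positive measure, and the product is 1 on that cylinder. *)

Section ConstituentEvaluation.
Context {np : nat} {ar : 'I_np -> nat}.

Lemma eval_reduct (f : foform ar) d k (x : Con ar d.+1 k) s :
  (qdepth f <= d)%N -> Defs.eval f (reduct x) s = Defs.eval f x s.
Proof.
elim: f d k x s => [p t|g IH|g IHg h IHh|g IHg h IHh|g IHg h IHh|y g IH|y g IH]
  d k x s /=; rewrite ?geq_max.
- by case: d x.
- by move=> hd; rewrite IH.
- by case/andP=> hg hh; rewrite IHg // IHh.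
- by case/andP=> hg hh; rewrite IHg // IHh.
- by case/andP=> hg hh; rewrite IHg // IHh.
- case: d x => [|d] x //= hd.
  apply/existsP/existsP => [[_ /andP[/imsetP[c cx ->] ev]]|[c /andP[cx ev]]].
    by exists c; rewrite cx -IH.
  by exists (reduct c); rewrite imset_f //= IH.
- case: d x => [|d] x //= hd.
  apply/forallP/forallP => [ev c|ev c]; apply/implyP.
    by move=> cx; rewrite -IH //; apply: (implyP (ev _)); rewrite imset_f.
  by case/imsetP=> c' cx ->; rewrite IH //; apply: (implyP (ev c')).
Qed.

Lemma eval_path (f : foform ar) (w : Defs.path ar) d1 d2 s :
  (qdepth f <= d1 <= d2)%N ->
  Defs.eval f (proj1_sig w d1) s = Defs.eval f (proj1_sig w d2) s.
Proof.
case/andP=> hf; elim: d2 => [|d2 IH]; first by rewrite leqn0 => /eqP ->.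
rewrite leq_eqVlt ltnS => /predU1P[-> //|hd].
by rewrite IH // -(proj2_sig w d2) eval_reduct // (leq_trans hf).
Qed.

End ConstituentEvaluation.

Section RealizedConstituent.
Context {np : nat} {ar : 'I_np -> nat}.
Context {D : Type} (I : forall p : 'I_np, (ar p).-tuple D -> Prop).

Definition realized_atoms k (a : nat -> D) : {ffun Atm ar k -> bool} :=
  [ffun t : Atm ar k =>
     `[< I (tag t) (map_tuple (fun i : 'I_k => a (nat_of_ord i)) (tagged t)) >]].

Fixpoint realized d k (a : nat -> D) : Con ar d k :=
  match d return Con ar d k with
  | 0 => realized_atoms k a
  | d'.+1 => (realized_atoms k a,
              [set c | `[< exists e, c = realized d' k.+1 (upd a k e) >]])
  end.

Lemma atomsOf_realized d k a : atomsOf (realized d k a) = realized_atoms k a.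
Proof. by case: d. Qed.

Lemma atoms_hold_realized k a : atoms_hold I a (realized_atoms k a).
Proof. by move=> t; rewrite ffunE; split => /asboolP. Qed.

Lemma satC_realized d k a : satC I a (realized d k a).
Proof.
elim: d k a => [|d IH] k a /=; first exact: atoms_hold_realized.
split; first exact: atoms_hold_realized.
- by move=> g; rewrite inE => /asboolP[e ->]; exists e.
- move=> e; exists (realized d k.+1 (upd a k e)) => //.
  by rewrite inE; apply/asboolP; exists e.
Qed.

Definition agree {k} (s : nat -> option 'I_k) (a b : nat -> D) (xs : seq nat) :=
  forall y, y \in xs -> exists2 i : 'I_k, s y = Some i & b y = a i.

Lemma agree_sub k s a b (xs ys : seq nat) :
  {subset ys <= xs} -> @agree k s a b xs -> agree s a b ys.
Proof. by move=> sub ag y /sub; apply: ag. Qed.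

Lemma agree_extv k s a b y xs e :
  @agree k s a b [seq z <- xs | z != y] ->
  agree (extv s y) (upd a k e) (upd b y e) xs.
Proof.
move=> ag z zxs; rewrite /extv /upd; have [_ | zy] := eqVneq z y.
  by exists ord_max; rewrite //= eqxx.
have [|i -> ->] := ag z; first by rewrite mem_filter zy.
by exists (widen_ord (leqnSn k) i); rewrite //= ltn_eqF.
Qed.

Lemma oseq_agree k s a b (xs : seq nat) : @agree k s a b xs ->
  exists2 l : seq 'I_k, oseq [seq s y | y <- xs] = Some l &
    [seq a (nat_of_ord i) | i <- l] = [seq b y | y <- xs].
Proof.
elim: xs => [|y xs IH] ag; first by exists [::].
have [i si bi] := ag y (mem_head _ _).
have [|l sl al] := IH; first by apply: agree_sub ag => z zxs; rewrite inE zxs orbT.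
by exists (i :: l); rewrite /= ?si ?sl // al bi.
Qed.

Lemma lookA_realized k s a b p (t : (ar p).-tuple nat) : @agree k s a b t ->
  lookA (realized_atoms k a) t s = `[< I p (map_tuple b t) >].
Proof.
case/oseq_agree=> l; rewrite /lookA => -> al.
have sz : size l == ar p.
  by rewrite -(size_map (fun i : 'I_k => a i)) al size_map size_tuple.
rewrite insubT ffunE /=; congr `[< I p _ >]; exact: val_inj.
Qed.

Lemma eval_realized (f : foform ar) b d k a s : (qdepth f <= d)%N ->
  agree s a b (fv f) -> Defs.eval f (realized d k a) s = `[< sat I b f >].
Proof.
elim: f b d k a s => [p t|g IH|g IHg h IHh|g IHg h IHh|g IHg h IHh|y g IH|y g IH]
  b d k a s /=; rewrite ?geq_max.
- by rewrite atomsOf_realized => _; apply: lookA_realized.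
- by move=> hd ag; rewrite (IH b) // asbool_neg.
- case/andP=> hg hh ag; rewrite (IHg b) ?(IHh b) ?asbool_and //;
    by apply: agree_sub ag => z zf; rewrite mem_cat zf ?orbT.
- case/andP=> hg hh ag; rewrite (IHg b) ?(IHh b) ?asbool_or //;
    by apply: agree_sub ag => z zf; rewrite mem_cat zf ?orbT.
- case/andP=> hg hh ag; rewrite (IHg b) ?(IHh b) ?asbool_imply //;
    by apply: agree_sub ag => z zf; rewrite mem_cat zf ?orbT.
- case: d => [|d] //= hd ag.
  have evg e : Defs.eval g (realized d k.+1 (upd a k e)) (extv s y) =
               `[< sat I (upd b y e) g >].
    by rewrite (IH (upd b y e)) //; apply: agree_extv.
  apply/existsP/asboolP => [[c /andP[]]|[e he]].
    by rewrite inE => /asboolP[e ->]; rewrite evg => /asboolP; exists e.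
  exists (realized d k.+1 (upd a k e)); rewrite inE evg.
  by apply/andP; split; apply/asboolP; [exists e|].
- case: d => [|d] //= hd ag.
  have evg e : Defs.eval g (realized d k.+1 (upd a k e)) (extv s y) =
               `[< sat I (upd b y e) g >].
    by rewrite (IH (upd b y e)) //; apply: agree_extv.
  apply/forallP/asboolP => [ev e|ev c].
    apply/asboolP; rewrite -evg; apply: (implyP (ev _)).
    by rewrite inE; apply/asboolP; exists e.
  by apply/implyP; rewrite inE => /asboolP[e ->]; rewrite evg; apply/asboolP.
Qed.

Lemma eval_realized_sentence (f : foform ar) d a : sentence f ->
  (qdepth f <= d)%N ->
  Defs.eval f (realized d 0 a) (fun _ => None) = `[< sat I a f >].
Proof. by move=> sf hd; apply: eval_realized => // y; rewrite sf. Qed.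

End RealizedConstituent.

Section BoldFormula.
Context {np : nat} {ar : 'I_np -> nat} {R : realType}.

Lemma cyl_measurable d (x : Con ar d 0) : measurable (cyl x : set (Psi ar)).
Proof. by apply: sub_sigma_algebra; exists d, x. Qed.

Lemma indic_cylE d (x : Con ar d 0) (w : Psi ar) :
  \1_(cyl x) w = (x == proj1_sig w d)%:R :> R.
Proof.
rewrite indicE; have [->|xw] := eqVneq; first by rewrite mem_set.
by rewrite memNset //= => wx; rewrite -wx eqxx in xw.
Qed.

Lemma boldfE (f : foform ar) (w : Psi ar) {d} : (qdepth f <= d)%N ->
  boldf R f w = (Defs.eval f (proj1_sig w d) (fun _ => None))%:R.
Proof.
move=> hd; rewrite -(@eval_path _ _ f w (qdepth f)) ?leqnn //.
set y := proj1_sig w (qdepth f); rewrite /boldf.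
under eq_bigr do rewrite indic_cylE.
have [yf|yNf] := boolP (y \in dnf f).
  rewrite (bigD1 y) //= eqxx big1 ?addr0; last by move=> x /andP[_ /negbTE ->].
  by move: yf; rewrite inE => ->.
rewrite big1; last by move=> x xf; case: eqP xf => // ->; rewrite (negbTE yNf).
by move: yNf; rewrite inE => /negbTE ->.
Qed.

Lemma measurable_boldf (f : foform ar) :
  measurable_fun setT (boldf R f : Psi ar -> R).
Proof.
rewrite (_ : boldf R f = fun w => \sum_(x <- enum (dnf f)) \1_(cyl x) w).
  apply: measurable_sum => x; apply: measurable_indic; exact: cyl_measurable.
by apply/funext => w; rewrite big_enum.
Qed.

Lemma boldfI (f g : foform ar) (w : Psi ar) :
  boldf R (FAnd f g) w = boldf R f w * boldf R g w.
Proof.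
rewrite (boldfE (FAnd f g) w (leqnn _)) (boldfE f w (leq_maxl _ (qdepth g))).
rewrite (boldfE g w (leq_maxr (qdepth f) _)) /=.
by case: (Defs.eval f _ _); rewrite ?mul1r ?mul0r.
Qed.

Lemma boldfU (f g : foform ar) (w : Psi ar) :
  boldf R (FOr f g) w = Num.max (boldf R f w) (boldf R g w).
Proof.
rewrite (boldfE (FOr f g) w (leqnn _)) (boldfE f w (leq_maxl _ (qdepth g))).
rewrite (boldfE g w (leq_maxr (qdepth f) _)) /=.
case: (Defs.eval f _ _); case: (Defs.eval g _ _);
  by rewrite /= ?mulr1n ?mulr0n ?maxxx ?(max_idPl ler01) ?(max_idPr ler01).
Qed.

Lemma measure_cyl_le_integral_boldf (mu : {measure set Psi ar -> \bar R})
    (f : foform ar) {d} (x : Con ar d 0) :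
  (qdepth f <= d)%N -> Defs.eval f x (fun _ => None) ->
  (mu (cyl x) <= \int[mu]_w (boldf R f w)%:E)%E.
Proof.
move=> hd fx; rewrite -[cyl x]setIT -integral_indic //; last exact: cyl_measurable.
apply: ge0_le_integral => //.
- by apply/measurable_EFinP/measurable_indic; exact: cyl_measurable.
- by apply/measurable_EFinP; exact: measurable_boldf.
- move=> w _; rewrite lee_fin indic_cylE (boldfE f w hd).
  by case: eqP => [<-|_]; rewrite ?fx ?lexx ?ler0n.
Qed.

End BoldFormula.

Theorem mainTheorem9
  (np : nat) (ar : 'I_np -> nat) (ar_pos : forall p, (0 < ar p)%N)
  (triv : forall d, Con ar d 0 -> bool)
  (triv_sound : forall d (x : Con ar d 0), triv d x ->
     forall (D : Type) (I : forall p : 'I_np, (ar p).-tuple D -> Prop)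
       (a : nat -> D), ~ satC I a x)
  (R : realType) (H : forall d, Con ar d 0 -> R)
  (hH : hintikka_tree H) (hreas : reasonable triv H)
  (beta : probability (Psi ar) R)
  (hbeta : forall d (x : Con ar d 0), beta (cyl x) = (H d x)%:E)
  (phi phi1 phi2 : foform ar)
  (sphi : sentence phi) (sphi1 : sentence phi1) (sphi2 : sentence phi2) :
  [/\ (\int[beta]_w ((boldf R phi w * boldf R (FNot phi) w)%:E) = 0)%E,
      {ae beta, forall w,
         boldf R (FOr phi1 phi2) w = Num.max (boldf R phi1 w) (boldf R phi2 w)} &
      ((\int[beta]_w ((boldf R phi1 w * boldf R phi2 w)%:E) = 0)%E ->
         entails phi1 (FNot phi2))].
Proof.
split.
- apply: integral0_eq => w _.
  by rewrite -boldfI (boldfE (FAnd phi (FNot phi)) w (leqnn _)) /= andbN.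
- exact: aeW (boldfU phi1 phi2).
- move=> int0 D I a sat1 sat2.
  pose psi := FAnd phi1 phi2; pose x := realized I (qdepth psi) 0 a.
  have spsi : sentence psi by rewrite /sentence /= sphi1 sphi2.
  have psi_x : Defs.eval psi x (fun _ => None).
    by rewrite eval_realized_sentence //; apply/asboolP.
  have /hreas H_pos : ~~ triv _ x.
    by apply/negP => /triv_sound /(_ D I a); apply; apply: satC_realized.
  have beta_pos : (0 < beta (cyl x))%E by rewrite hbeta lte_fin.
  have := lt_le_trans beta_pos
    (measure_cyl_le_integral_boldf beta psi x (leqnn _) psi_x).
  under eq_integral do rewrite boldfI.
  by rewrite int0 ltxx.
Qed.
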